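(* Let $D$ be a division algebra and let $\sigma_1,\sigma_2$ be two commuting automorphisms of $D$. In the skew polynomial ring $T=D[t_1,t_2;\sigma_1,\sigma_2]$, let $I$ be the two-sided ideal generated by $t_1t_2$, and let $S=T/I$. Then $S$ is automorphically normalizable over $D$ if and only if $\sigma_1^{k_1}\circ\sigma_2^{-k_2}$ is an inner automorphism of $D$ for some positive integers $k_1,k_2$.
   Context: All rings are associative with unity. An inner automorphism of $D$ is a map $r\mapsto crc^{-1}$ with $c\in D^\times$. $D[t_1,t_2;\sigma_1,\sigma_2]$ is the skew polynomial ring in two commuting variables with $t_ia=\sigma_i(a)t_i$ for $a\in D$. For a ring $S\supseteq D$, $a\in S$ is automorphic over $D$ with respect to $\tau\in\mathrm{Aut}(D)$ if $ab=\tau(b)a$ for all $b\in D$. Commuting $a_1,\ldots,a_m\in S$ are (left) algebraically independent over $D$ if monomials in them are left linearly independent over $D$. $S$ is automorphically normalizable over $D$ if there exist $m\ge0$ and commuting $a_1,\ldots,a_m\in S$, automorphic over $D$ with respect to pairwise commuting automorphisms, left algebraically independent over $D$, such that $S$ is finitely generated as a left module over the subring $D[a_1,\ldots,a_m]$ generated by $D\cup\{a_1,\ldots,a_m\}$. *)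

From HB Require Import structures.
From mathcomp Require Import all_boot all_order all_algebra.
Set Implicit Arguments. Unset Strict Implicit. Unset Printing Implicit Defensive.
Import GRing.Theory.
Local Open Scope ring_scope.

Definition is_division_ring (D : unitRingType) : Prop :=
  forall x : D, x != 0 -> x \is a GRing.unit.

Definition is_inner (D : unitRingType) (f : D -> D) : Prop :=
  exists c : D, c \is a GRing.unit /\ forall r : D, f r = c * r * c^-1.

(* T with phi : D -> T and t1, t2 is the skew polynomial ring
   D[t1,t2;s1,s2]: t1, t2 commute, t_i phi(a) = phi(s_i a) t_i, and the
   monomials t1^i t2^j form a basis of T as a left D-module. *)
Definition skew_mono (T : nzRingType) (t1 t2 : T) (p : nat * nat) : T :=
  t1 ^+ p.1 * t2 ^+ p.2.

Definition is_skew_poly2 (D : unitRingType) (s1 s2 : D -> D) (T : nzRingType)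
    (phi : D -> T) (t1 t2 : T) : Prop :=
  [/\ t1 * t2 = t2 * t1,
      (forall a : D, t1 * phi a = phi (s1 a) * t1),
      (forall a : D, t2 * phi a = phi (s2 a) * t2),
      (forall x : T, exists (s : seq (nat * nat)) (c : nat * nat -> D),
          x = \sum_(p <- s) phi (c p) * skew_mono t1 t2 p) &
      (forall (s : seq (nat * nat)) (c : nat * nat -> D), uniq s ->
          \sum_(p <- s) phi (c p) * skew_mono t1 t2 p = 0 ->
          forall p, p \in s -> c p = 0)].

Definition in_ideal2 (T : nzRingType) (g x : T) : Prop :=
  exists l r : seq T, size l = size r /\
    x = \sum_(i < size l) l`_i * g * r`_i.

Definition is_quotient_by (T S : nzRingType) (pi : T -> S) (I : T -> Prop) :=
  (forall y : S, exists x : T, pi x = y) /\ (forall x : T, pi x = 0 <-> I x).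

Inductive gen_subring (D : unitRingType) (S : nzRingType) (psi : D -> S)
    (m : nat) (a : 'I_m -> S) : S -> Prop :=
  | gsD b : gen_subring psi a (psi b)
  | gsA i : gen_subring psi a (a i)
  | gs1 : gen_subring psi a 1
  | gsAdd x y : gen_subring psi a x -> gen_subring psi a y ->
      gen_subring psi a (x + y)
  | gsOpp x : gen_subring psi a x -> gen_subring psi a (- x)
  | gsMul x y : gen_subring psi a x -> gen_subring psi a y ->
      gen_subring psi a (x * y).

Definition automorphic (D : unitRingType) (S : nzRingType) (psi : D -> S)
    (tau : D -> D) (x : S) : Prop :=
  forall b : D, x * psi b = psi (tau b) * x.

Definition left_alg_indep (D : unitRingType) (S : nzRingType) (psi : D -> S)
    (m : nat) (a : 'I_m -> S) : Prop :=
  forall (s : seq {ffun 'I_m -> nat}) (c : {ffun 'I_m -> nat} -> D), uniq s ->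
    \sum_(e <- s) psi (c e) * \prod_(i < m) a i ^+ e i = 0 ->
    forall e, e \in s -> c e = 0.

Definition left_fin_gen_over (D : unitRingType) (S : nzRingType) (psi : D -> S)
    (m : nat) (a : 'I_m -> S) : Prop :=
  exists g : seq S, forall x : S, exists r : 'I_(size g) -> S,
    (forall i, gen_subring psi a (r i)) /\ x = \sum_(i < size g) r i * g`_i.

Definition aut_normalizable (D : unitRingType) (S : nzRingType) (psi : D -> S) :
    Prop :=
  exists (m : nat) (a : 'I_m -> S) (tau : 'I_m -> {rmorphism D -> D}),
    (forall i j, a i * a j = a j * a i) /\
    (forall i, bijective (tau i)) /\
    (forall i j, forall b, tau i (tau j b) = tau j (tau i b)) /\
    (forall i, automorphic psi (tau i) (a i)) /\
    left_alg_indep psi a /\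
    left_fin_gen_over psi a.

(* S = T/(t1 t2) is a free left D-module on the monomials t1^i and t2^j lying
   on the two axes, all other monomials vanishing in S.  An element automorphic
   for tau has, at each axis monomial t1^p.1 t2^p.2, a coefficient d with
   d s1^p.1 s2^p.2 (b) = tau(b) d.  If S is finite over D[a_1, ..., a_m], some a_i
   involves a positive power t2^j and some a_l a positive power t1^k, for
   otherwise the degrees along that axis of D[a], and of the finite module it
   generates, would be bounded.  Comparing the two twisted commutation relations
   shows that s1^k s2^-j is inner: directly if one generator involves both
   powers, and otherwise through the constant terms of a_i and a_l, which
   independence forces to be nonzero (else a_i a_l = d a_l).  Conversely, if
   c s2^k2 (b) = s1^k1 (b) c, then a = t1^k1 + c t2^k2 is automorphic for s1^k1,
   its powers are independent (look at their t1-coefficients), and S is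
   generated over D[a] by 1, t1, ..., t1^k1, t2, ..., t2^k2. *)

From HB Require Import structures.
From mathcomp Require Import all_boot all_order all_algebra.
From mathcomp Require Import zify.
From Stdlib Require Import Classical.
Import GRing.Theory.
Local Open Scope ring_scope.
Set Implicit Arguments. Unset Strict Implicit. Unset Printing Implicit Defensive.

Lemma sum_if_eq_uniq (V : nmodType) (I : eqType) (r : seq I) j (x : V) :
  uniq r -> \sum_(i <- r) (if j == i then x else 0) = if j \in r then x else 0.
Proof.
elim: r => [|a r IH] /=; first by rewrite big_nil.
case/andP => ar ur; rewrite big_cons IH // in_cons.
case: (eqVneq j a) => [->|_] /=; last by rewrite add0r.
by rewrite (negbTE ar) addr0.
Qed.

Lemma sum_group_by (V : nmodType) (A K : eqType) (key : A -> K) (F : A -> V)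
    (L : seq K) (s : seq A) :
  uniq L -> (forall y, y \in s -> key y \notin L -> F y = 0) ->
  \sum_(y <- s) F y = \sum_(k <- L) \sum_(y <- s | key y == k) F y.
Proof.
move=> uL hF; under [RHS]eq_bigr do rewrite big_mkcond.
rewrite exchange_big /= [LHS]big_seq [RHS]big_seq; apply: eq_bigr => y ys.
by rewrite sum_if_eq_uniq //; case: ifP => // /negbT; apply: hF.
Qed.

Lemma prod_seq_two (R : pzSemiRingType) (I : eqType) (r : seq I) (F : I -> R) i l :
  uniq r -> i != l -> F i * F l = F l * F i ->
  (forall k, k != i -> k != l -> F k = 1) ->
  \prod_(k <- r) F k = (if i \in r then F i else 1) * (if l \in r then F l else 1).
Proof.
move=> ur il hc h1; elim: r ur => [|x r IH] /=; first by rewrite big_nil mulr1.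
case/andP => xr ur; rewrite big_cons IH // !in_cons.
case: (eqVneq x i) => [exi | xi].
  by subst x; rewrite (negbTE xr) mul1r /= (eq_sym l i) (negbTE il).
case: (eqVneq x l) => [exl | xl] /=; last by rewrite h1 // mul1r.
by subst x; rewrite (negbTE xr) mulr1; case: (i \in r); rewrite ?mul1r ?mulr1.
Qed.

Lemma commrX_twist (R : pzSemiRingType) (A : Type) (t : R) (h : A -> R) (s : A -> A) :
  (forall a, t * h a = h (s a) * t) ->
  forall n a, t ^+ n * h a = h (iter n s a) * t ^+ n.
Proof.
move=> ht; elim=> [|n IH] a; first by rewrite expr0 mul1r mulr1.
by rewrite exprS -mulrA IH mulrA ht -mulrA -exprS.
Qed.

Fixpoint iter_rmorphism (R : nzRingType) (f : {rmorphism R -> R}) n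
    : {rmorphism R -> R} :=
  if n is n'.+1 then ((f : R -> R) \o iter_rmorphism f n' : {rmorphism R -> R})
  else idfun.

Lemma iter_rmorphismE (R : nzRingType) (f : {rmorphism R -> R}) n x :
  iter_rmorphism f n x = iter n f x.
Proof. by elim: n => //= n IH; rewrite IH. Qed.

Lemma iter_can (A : Type) (g ginv : A -> A) n :
  cancel ginv g -> cancel (iter n ginv) (iter n g).
Proof. by move=> h; elim: n => // n IH r; rewrite iterSr iterS h IH. Qed.

Lemma iter_bij (A : Type) (f : A -> A) n : bijective f -> bijective (iter n f).
Proof.
move=> bf; elim: n => [|n IH]; first by exists id.
by apply: (eq_bij (bij_comp bf IH)) => x; rewrite iterS.
Qed.

Lemma is_inner_comp_twist (D : unitRingType) (f g ginv tau : D -> D) (alpha beta : D) :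
  alpha \is a GRing.unit -> beta \is a GRing.unit -> cancel ginv g ->
  (forall b, alpha * f b = tau b * alpha) -> (forall b, beta * g b = tau b * beta) ->
  is_inner (fun r => f (ginv r)).
Proof.
move=> ua ub hc ha hb; exists (alpha^-1 * beta); split; first by rewrite unitrMl ?unitrV.
move=> r; set y := ginv r.
have -> : f y = alpha^-1 * (tau y * alpha) by rewrite -ha mulKr.
have -> : tau y = beta * r * beta^-1 by rewrite -(hc r) -/y hb mulrK.
by rewrite invrM ?unitrV // invrK !mulrA.
Qed.

Lemma twist_untwist (D : unitRingType) (f tau : D -> D) (d beta : D) :
  d \is a GRing.unit -> (forall b, d * b = tau b * d) ->
  (forall b, beta * f b = tau b * beta) ->
  forall b, (d^-1 * beta) * f b = id b * (d^-1 * beta).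
Proof.
move=> ud hd hb b /=.
have tb : tau b = d * b * d^-1 by rewrite hd mulrK.
by rewrite -mulrA hb tb !mulrA mulVr // mul1r.
Qed.

Lemma alg_indep_mul_neq (D : unitRingType) (S : nzRingType) (psi : {rmorphism D -> S})
    m (a : 'I_m -> S) (i l : 'I_m) (d : D) :
  left_alg_indep psi a -> i != l -> a i * a l = a l * a i -> a i * a l != psi d * a l.
Proof.
move=> hind il hc; apply/eqP => eq_il.
pose e2 : {ffun 'I_m -> nat} := [ffun k => ((k == i) + (k == l))%N].
pose e1 : {ffun 'I_m -> nat} := [ffun k => nat_of_bool (k == l)].
have ne : e2 != e1 by apply/eqP => /ffunP /(_ i); rewrite !ffunE eqxx (negbTE il).
have li : (l == i) = false by rewrite eq_sym (negbTE il).
have prod_e2 : \prod_(k < m) a k ^+ e2 k = a i * a l.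
  rewrite (@prod_seq_two _ _ _ _ i l) ?index_enum_uniq ?mem_index_enum ?ffunE
    ?eqxx ?(negbTE il) ?li ?expr1 // => k ki kl.
  by rewrite ffunE (negbTE ki) (negbTE kl).
have prod_e1 : \prod_(k < m) a k ^+ e1 k = a l.
  rewrite (@prod_seq_two _ _ _ _ i l) ?index_enum_uniq ?mem_index_enum ?ffunE
    ?eqxx ?(negbTE il) ?expr0 ?mul1r ?mulr1 // => k ki kl.
  by rewrite ffunE (negbTE kl).
have uniq_e : uniq [:: e2; e1] by rewrite /= inE ne.
have sum_e : \sum_(e <- [:: e2; e1])
    psi (if e == e2 then 1 else - d) * \prod_(k < m) a k ^+ e k = 0.
  rewrite !big_cons big_nil eqxx eq_sym (negbTE ne) prod_e2 prod_e1 rmorph1 mul1r.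
  by rewrite rmorphN mulNr eq_il addr0 subrr.
by have /eqP := hind _ _ uniq_e sum_e e2 (mem_head _ _); rewrite eqxx oner_eq0.
Qed.

Definition addp (p q : nat * nat) := (p.1 + q.1, p.2 + q.2)%N.
Definition subp (p q : nat * nat) := (p.1 - q.1, p.2 - q.2)%N.
Definition box (p : nat * nat) :=
  [seq (i, j) | i <- iota 0 p.1.+1, j <- iota 0 p.2.+1].

Lemma box_uniq p : uniq (box p).
Proof. by apply: allpairs_uniq; rewrite ?iota_uniq // => [[? ?] [? ?]] _ _ /= [-> ->]. Qed.

Lemma mem_box p q : (q \in box p) = (q.1 <= p.1)%N && (q.2 <= p.2)%N.
Proof.
apply/allpairsP/andP => [[[i j] [hi hj ->]] | [h1 h2]].
  by move: hi hj; rewrite !mem_iota /=; split; lia.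
by exists q; rewrite !mem_iota; split; [lia | lia | case: q {h1 h2}].
Qed.

Lemma sum_box_addp (V : nmodType) (a b p : nat * nat) (x : V) :
  \sum_(q <- box p) (if (a == q) && (b == subp p q) then x else 0) =
  if addp a b == p then x else 0.
Proof.
case: a b p => [a1 a2] [b1 b2] [p1 p2]; rewrite /addp xpair_eqE /=.
case: ifP => [/andP [/eqP h1 /eqP h2] | h].
  have aB : (a1, a2) \in box (p1, p2) by rewrite mem_box /=; apply/andP; split; lia.
  have := sum_if_eq_uniq (a1, a2) x (box_uniq (p1, p2)); rewrite aB => E.
  rewrite -[RHS]E.
  apply: eq_bigr => q _; case: (eqVneq (a1, a2) q) => //= <-.
  suff -> : (b1, b2) == subp (p1, p2) (a1, a2) by [].
  by rewrite xpair_eqE /= -h1 -h2 !addKn !eqxx.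
rewrite big_seq big1 // => q; rewrite mem_box => /andP [hq1 hq2].
case: (eqVneq (a1, a2) q) => //= eq; subst q.
case: (eqVneq (b1, b2) (subp (p1, p2) (a1, a2))) => //= -[e1 e2].
by move: h hq1 hq2; rewrite e1 e2 /= => /negbT; rewrite negb_and => /orP [] /eqP; lia.
Qed.

Definition axis (p : nat * nat) := (p.1 == 0%N) || (p.2 == 0%N).

Definition ax (b : bool) n : nat * nat := if b then (n, 0%N) else (0%N, n).

Lemma ax0 b : ax b 0 = (0%N, 0%N).
Proof. by case: b. Qed.

Lemma axis_ax b n : axis (ax b n).
Proof. by case: b; rewrite /axis /= ?eqxx ?orbT. Qed.

Lemma axis_cases b p : axis p -> exists n, p = ax b n \/ p = ax (~~ b) n.
Proof.
case: p => i j; rewrite /axis => /orP [] /eqP /= ->.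
  by exists j; case: b; [right | left].
by exists i; case: b; [left | right].
Qed.

Lemma box_axis p q : axis p -> q \in box p -> axis q /\ axis (subp p q).
Proof.
rewrite /axis mem_box /subp /=; case: p q => [a b] [c d] /=.
by case/orP => /eqP -> /andP [h1 h2]; split; apply/orP; [left|left|right|right]; lia.
Qed.

Section SkewPolynomial.
Variables (D : unitRingType) (s1 s2 : {rmorphism D -> D}) (T : nzRingType)
  (phi : {rmorphism D -> T}) (t1 t2 : T).
Hypothesis hT : is_skew_poly2 s1 s2 phi t1 t2.

Local Notation mono := (skew_mono t1 t2).

Definition mono_aut (p : nat * nat) : {rmorphism D -> D} :=
  ((iter_rmorphism s1 p.1 : D -> D) \o iter_rmorphism s2 p.2 : {rmorphism D -> D}).

Lemma mono_autE p d : mono_aut p d = iter p.1 s1 (iter p.2 s2 d).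
Proof. by rewrite /= !iter_rmorphismE. Qed.

Lemma t1X_phi n a : t1 ^+ n * phi a = phi (iter n s1 a) * t1 ^+ n.
Proof. by case: hT => _ h1 _ _ _; apply: commrX_twist. Qed.

Lemma t2X_phi n a : t2 ^+ n * phi a = phi (iter n s2 a) * t2 ^+ n.
Proof. by case: hT => _ _ h2 _ _; apply: commrX_twist. Qed.

Lemma t2X_t1X i j : t2 ^+ j * t1 ^+ i = t1 ^+ i * t2 ^+ j.
Proof. by case: hT => h12 _ _ _ _; apply: commrX; apply/esym/commrX. Qed.

Lemma mono_phi p a : mono p * phi a = phi (mono_aut p a) * mono p.
Proof. by rewrite /skew_mono -mulrA t2X_phi mulrA t1X_phi -mulrA mono_autE. Qed.

Lemma mono_mul p q : mono p * mono q = mono (addp p q).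
Proof.
rewrite /skew_mono /addp /= !exprD -!mulrA; congr (_ * _).
by rewrite !mulrA t2X_t1X.
Qed.

Definition tsum (s : seq (D * (nat * nat))) : T := \sum_(y <- s) phi y.1 * mono y.2.
Definition tcoef (s : seq (D * (nat * nat))) p : D := \sum_(y <- s | y.2 == p) y.1.
Definition topp (s : seq (D * (nat * nat))) := [seq (- y.1, y.2) | y <- s].
Definition tmul (s s' : seq (D * (nat * nat))) :=
  [seq (y.1 * mono_aut y.2 z.1, addp y.2 z.2) | y <- s, z <- s'].

Lemma tsum_cat s s' : tsum (s ++ s') = tsum s + tsum s'.
Proof. by rewrite /tsum big_cat. Qed.

Lemma tsum_opp s : tsum (topp s) = - tsum s.
Proof. by rewrite /tsum big_map -sumrN; apply: eq_bigr => y _; rewrite rmorphN mulNr. Qed.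

Lemma tcoef_cat s s' p : tcoef (s ++ s') p = tcoef s p + tcoef s' p.
Proof. by rewrite /tcoef big_cat. Qed.

Lemma tcoef_opp s p : tcoef (topp s) p = - tcoef s p.
Proof. by rewrite /tcoef big_map -sumrN. Qed.

Lemma tsum_mul s s' : tsum s * tsum s' = tsum (tmul s s').
Proof.
rewrite /tsum /tmul big_allpairs_dep mulr_suml; apply: eq_bigr => y _.
rewrite mulr_sumr; apply: eq_bigr => z _ /=.
by rewrite mulrA -(mulrA (phi y.1)) mono_phi mulrA -rmorphM -mulrA mono_mul.
Qed.

Lemma tcoef_mul s s' p :
  tcoef (tmul s s') p = \sum_(q <- box p) tcoef s q * mono_aut q (tcoef s' (subp p q)).
Proof.
symmetry; transitivity (\sum_(q <- box p) \sum_(y <- s) \sum_(z <- s')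
    (if (y.2 == q) && (z.2 == subp p q) then y.1 * mono_aut y.2 z.1 else 0)).
  apply: eq_bigr => q _; rewrite /tcoef rmorph_sum mulr_suml big_mkcond.
  apply: eq_bigr => y _ /=; case: (eqVneq y.2 q) => [<-|_] /=; last by rewrite big1.
  rewrite mulr_sumr big_mkcond; apply: eq_bigr => z _ /=.
  by case: ifP.
rewrite exchange_big /tcoef /tmul [RHS]big_mkcond [RHS]big_allpairs_dep /=.
apply: eq_bigr => y _; rewrite exchange_big; apply: eq_bigr => z _ /=.
by rewrite sum_box_addp.
Qed.

Lemma tsum_surj x : exists s, x = tsum s.
Proof.
case: hT => _ _ _ hs _; have [s [c ->]] := hs x.
by exists [seq (c p, p) | p <- s]; rewrite /tsum big_map.
Qed.

Lemma tsum_eq0_tcoef s : tsum s = 0 -> forall p, tcoef s p = 0.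
Proof.
move=> s0 p; case: hT => _ _ _ _ hu.
set L := undup [seq y.2 | y <- s].
have uL : uniq L := undup_uniq _.
have sL y : y \in s -> y.2 \in L by move=> ys; rewrite mem_undup map_f.
have L0 : \sum_(q <- L) phi (tcoef s q) * mono q = 0.
  rewrite -[RHS]s0 /tsum (@sum_group_by _ _ _ snd _ L) // => [|y /sL ->//].
  apply: eq_bigr => q _; rewrite rmorph_sum mulr_suml.
  by apply: eq_bigr => y /eqP ->.
case pL: (p \in L); first exact: hu L (tcoef s) uL L0 p pL.
rewrite /tcoef big_seq_cond big1 // => y /andP [ys /eqP yp].
by move: pL; rewrite -yp sL.
Qed.

Definition interior (s : seq (D * (nat * nat))) :=
  all (fun y => (0 < y.2.1) && (0 < y.2.2))%N s.

Lemma ideal_tsum_interior x : in_ideal2 (t1 * t2) x ->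
  exists2 s, x = tsum s & interior s.
Proof.
case=> l [r [_ ->]]; apply: (big_ind (fun x => exists2 s, x = tsum s & interior s)).
- by exists [::]; rewrite // /tsum big_nil.
- move=> _ _ [sa -> pa] [sb -> pb]; exists (sa ++ sb); first by rewrite tsum_cat.
  by rewrite /interior all_cat; apply/andP.
move=> i _; have [sl ->] := tsum_surj l`_i; have [sr ->] := tsum_surj r`_i.
have -> : t1 * t2 = tsum [:: (1 : D, (1%N, 1%N))].
  by rewrite /tsum big_cons big_nil addr0 rmorph1 mul1r /skew_mono /= !expr1.
rewrite !tsum_mul; eexists; first reflexivity.
apply/allP => w /allpairsP [[p1 p2] [/= /allpairsP [[q1 q2] [/= _]]]].
by rewrite inE => /eqP -> -> _ -> /=; rewrite /addp /=; apply/andP; split; lia.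
Qed.

Section Quotient.
Variables (S : nzRingType) (pi : {rmorphism T -> S}).
Hypothesis hS : is_quotient_by pi (in_ideal2 (t1 * t2)).

Definition psi : {rmorphism D -> S} := ((pi : T -> S) \o phi : {rmorphism D -> S}).
Definition monoS p : S := pi (mono p).

Lemma psiE d : psi d = pi (phi d). Proof. by []. Qed.

Lemma pi_tsum s : pi (tsum s) = \sum_(y <- s) psi y.1 * monoS y.2.
Proof. by rewrite rmorph_sum; apply: eq_bigr => y _; rewrite rmorphM. Qed.

Lemma quotient_lift x : exists s, x = pi (tsum s).
Proof.
case: hS => hsur _; have [y <-] := hsur x; have [s ->] := tsum_surj y.
by exists s.
Qed.

Lemma pi_tsum_eq0 s p : pi (tsum s) = 0 -> axis p -> tcoef s p = 0.
Proof.
case: hS => _ hker /hker /ideal_tsum_interior [s0 e0 int0] ap.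
have /tsum_eq0_tcoef/(_ p) : tsum (s ++ topp s0) = 0.
  by rewrite tsum_cat tsum_opp e0 subrr.
rewrite tcoef_cat tcoef_opp; suff -> : tcoef s0 p = 0 by rewrite subr0.
rewrite /tcoef big_seq_cond big1 // => y /andP [ys /eqP yp].
move/allP: int0 => /(_ y ys); rewrite yp; move: ap; rewrite /axis.
by case: p {yp} => a b /= /orP [] /eqP -> /andP []; lia.
Qed.

Lemma pi_tsum_tcoef s s' p :
  pi (tsum s) = pi (tsum s') -> axis p -> tcoef s p = tcoef s' p.
Proof.
move=> ss' ap; apply/eqP; rewrite -subr_eq0 -tcoef_opp -tcoef_cat.
by apply/eqP/pi_tsum_eq0; rewrite // tsum_cat tsum_opp rmorphB ss' subrr.
Qed.

Lemma quotient_lift_eq x : exists s, x == pi (tsum s).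
Proof. by have [s ->] := quotient_lift x; exists s. Qed.

(* Coordinates on the axis monomials; junk value 0 off the axes. *)
Definition coef p x : D :=
  if axis p then tcoef (xchoose (quotient_lift_eq x)) p else 0.

Lemma coef_tsum p s : axis p -> coef p (pi (tsum s)) = tcoef s p.
Proof.
move=> ap; rewrite /coef ap; apply: pi_tsum_tcoef => //.
by move/eqP: (xchooseP (quotient_lift_eq (pi (tsum s)))) => <-.
Qed.

Lemma coef_is_zmod_morphism p : zmod_morphism (coef p).
Proof.
move=> x y; case ap: (axis p); last by rewrite /coef ap subr0.
have [sx ->] := quotient_lift x; have [sy ->] := quotient_lift y.
by rewrite -rmorphB -tsum_opp -tsum_cat !coef_tsum // tcoef_cat tcoef_opp.
Qed.

HB.instance Definition _ p :=
  GRing.isZmodMorphism.Build S D (coef p) (coef_is_zmod_morphism p).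

Lemma coefD p x y : coef p (x + y) = coef p x + coef p y.
Proof. exact: raddfD. Qed.

Lemma coefN p x : coef p (- x) = - coef p x.
Proof. exact: raddfN. Qed.

Lemma coefB p x y : coef p (x - y) = coef p x - coef p y.
Proof. exact: raddfB. Qed.

Lemma coef_sum p (I : Type) (r : seq I) (F : I -> S) :
  coef p (\sum_(i <- r) F i) = \sum_(i <- r) coef p (F i).
Proof. exact: raddf_sum. Qed.

Lemma coef_psiM p d x : coef p (psi d * x) = d * coef p x.
Proof.
case ap: (axis p); last by rewrite /coef ap mulr0.
have [s ->] := quotient_lift x.
have -> : psi d * pi (tsum s) = pi (tsum [seq (d * y.1, y.2) | y <- s]).
  rewrite /tsum big_map rmorph_sum mulr_sumr rmorph_sum.
  by apply: eq_bigr => y _; rewrite !rmorphM mulrA.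
by rewrite !coef_tsum // /tcoef big_map mulr_sumr.
Qed.

Lemma coef_mulpsi p x d : coef p (x * psi d) = coef p x * mono_aut p d.
Proof.
case ap: (axis p); last by rewrite /coef ap mul0r.
have [s ->] := quotient_lift x.
have -> : pi (tsum s) * psi d = pi (tsum [seq (y.1 * mono_aut y.2 d, y.2) | y <- s]).
  rewrite /tsum big_map rmorph_sum mulr_suml rmorph_sum.
  by apply: eq_bigr => y _; rewrite psiE -rmorphM -mulrA mono_phi mulrA -rmorphM.
rewrite !coef_tsum // /tcoef big_map mulr_suml.
by apply: eq_bigr => y /= /eqP ->.
Qed.

Lemma coef_psi_monoS p d q : axis p -> coef p (psi d * monoS q) = if q == p then d else 0.
Proof.
move=> ap; have -> : psi d * monoS q = pi (tsum [:: (d, q)]).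
  by rewrite pi_tsum big_cons big_nil addr0.
by rewrite coef_tsum // /tcoef big_cons big_nil /=; case: ifP; rewrite ?addr0.
Qed.

Lemma monoS0 : monoS (0%N, 0%N) = 1.
Proof. by rewrite /monoS /skew_mono !expr0 mulr1 rmorph1. Qed.

Lemma monoS_interior q : (0 < q.1)%N -> (0 < q.2)%N -> monoS q = 0.
Proof.
case: hS => _ hker; case: q => [[|i] [|j]] //= _ _; apply/hker.
exists [:: t1 ^+ i], [:: t2 ^+ j]; split => //.
by rewrite big_ord1 /= /skew_mono /= exprSr exprS !mulrA.
Qed.

Lemma quotient_expansion x : exists L : seq (nat * nat),
  [/\ uniq L, all axis L & x = \sum_(p <- L) psi (coef p x) * monoS p].
Proof.
have [s ->] := quotient_lift x.
set L := undup [seq y.2 | y <- s & axis y.2].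
have axL p : p \in L -> axis p.
  by rewrite mem_undup => /mapP [y]; rewrite mem_filter => /andP [? _] ->.
exists L; split; [exact: undup_uniq | exact/allP |].
rewrite [LHS]pi_tsum (@sum_group_by _ _ _ snd _ L) ?undup_uniq //; last first.
  move=> y ys; case ay: (axis y.2).
    by rewrite mem_undup (map_f snd) // mem_filter ay.
  move/negbT: ay; rewrite /axis negb_or => /andP [h1 h2] _.
  by rewrite monoS_interior ?mulr0 // lt0n.
rewrite big_seq [RHS]big_seq; apply: eq_bigr => p /axL ap.
rewrite coef_tsum // /tcoef rmorph_sum mulr_suml.
by apply: eq_bigr => y /eqP ->.
Qed.

Lemma coef_inj x y : (forall p, axis p -> coef p x = coef p y) -> x = y.
Proof.
move=> h; apply/eqP; rewrite -subr_eq0; apply/eqP.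
have [L [_ aL ->]] := quotient_expansion (x - y).
rewrite big_seq big1 // => p /(allP aL) ap.
by rewrite coefB h // subrr rmorph0 mul0r.
Qed.

Lemma coef_bounded x : exists N, forall p, (N <= p.1 + p.2)%N -> coef p x = 0.
Proof.
have [L [uL aL ->]] := quotient_expansion x.
exists (\sum_(q <- L) (q.1 + q.2)).+1 => p hN.
case ap: (axis p); last by rewrite /coef ap.
rewrite coef_sum big_seq big1 // => q qL; rewrite coef_psi_monoS //.
case: (eqVneq q p) => // qp; move: hN; rewrite -qp.
by rewrite (bigD1_seq q) //= -addSn leqNgt leq_addr.
Qed.

Lemma coef_mul p x y : axis p ->
  coef p (x * y) = \sum_(q <- box p) coef q x * mono_aut q (coef (subp p q) y).
Proof.
move=> ap; have [sx ->] := quotient_lift x; have [sy ->] := quotient_lift y.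
rewrite -rmorphM tsum_mul coef_tsum // tcoef_mul big_seq [RHS]big_seq.
by apply: eq_bigr => q /(box_axis ap) [aq aq']; rewrite !coef_tsum.
Qed.

Lemma mono_aut0 d : mono_aut (0%N, 0%N) d = d.
Proof. by rewrite mono_autE. Qed.

Lemma coef_psi p d : axis p -> coef p (psi d) = if p == (0%N, 0%N) then d else 0.
Proof. by move=> ap; rewrite -[psi d]mulr1 -monoS0 coef_psi_monoS // eq_sym. Qed.

Lemma coef_mul_ax b n x y : coef (ax b n) (x * y) =
  \sum_(k <- iota 0 n.+1) coef (ax b k) x * mono_aut (ax b k) (coef (ax b (n - k)) y).
Proof.
rewrite coef_mul ?axis_ax //.
have -> : box (ax b n) = [seq ax b k | k <- iota 0 n.+1].
  by case: b; rewrite /box /= ?cats0 //; congr (_ :: _); elim: (iota 1 n) => //= k r ->.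
by rewrite big_map; apply: eq_bigr => k _; case: b.
Qed.

Definition ax_free b x := forall n, (0 < n)%N -> coef (ax b n) x = 0.

Lemma coef_mul_free b n x y :
  ax_free b x -> coef (ax b n) (x * y) = coef (0%N, 0%N) x * coef (ax b n) y.
Proof.
move=> hx; rewrite coef_mul_ax big_cons big1_seq ?addr0 => [|k /andP [_]].
  by rewrite ax0 mono_aut0 subn0.
by rewrite mem_iota => /andP [k0 _]; rewrite hx ?mul0r.
Qed.

Lemma coef_mul_ax0 b n x y :
  (forall k, coef (ax b k) y = 0) -> coef (ax b n) (x * y) = 0.
Proof. by move=> hy; rewrite coef_mul_ax big1 // => k _; rewrite hy rmorph0 mulr0. Qed.

Lemma mul_ax_free b x y : ax_free b x -> ax_free (~~ b) y -> coef (0%N, 0%N) y = 0 ->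
  x * y = psi (coef (0%N, 0%N) x) * y.
Proof.
move=> hx hy hy0; have hy' k : coef (ax (~~ b) k) y = 0.
  by case: k => [|k]; [rewrite ax0 | apply: hy].
apply: coef_inj => p /(axis_cases b) [n [] ->]; rewrite coef_psiM.
  exact: coef_mul_free.
by rewrite coef_mul_ax0 // hy' mulr0.
Qed.

Lemma gen_subring_ax_free b m (a : 'I_m -> S) : (forall i, ax_free b (a i)) ->
  forall r, gen_subring psi a r -> ax_free b r.
Proof.
have psi_free d : ax_free b (psi d).
  move=> n n0; rewrite coef_psi ?axis_ax //.
  by case: b; rewrite /= xpair_eqE (gtn_eqF n0) ?andbF.
move=> ha r; elim=> {r} [d | i | | x y _ hx _ hy | x _ hx | x y _ hx _ hy] n n0.
- exact: psi_free.
- exact: ha.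
- by rewrite -(rmorph1 psi); apply: psi_free.
- by rewrite coefD hx ?hy ?addr0.
- by rewrite coefN hx ?oppr0.
- by rewrite coef_mul_free // hy ?mulr0.
Qed.

Lemma coef_bounded_seq (g : seq S) :
  exists N, forall y, y \in g -> forall p, (N <= p.1 + p.2)%N -> coef p y = 0.
Proof.
elim: g => [|y g [N hN]]; first by exists 0%N.
have [Ny hy] := coef_bounded y.
exists (maxn N Ny) => z; rewrite inE => /orP [/eqP -> | zg] p hp.
  by apply: hy; move: hp; lia.
by apply: hN => //; move: hp; lia.
Qed.

Lemma fin_gen_ax_coef b m (a : 'I_m -> S) : left_fin_gen_over psi a ->
  exists i n, (0 < n)%N /\ coef (ax b n) (a i) != 0.
Proof.
move=> [g hg]; apply: NNPP => hne.
have ha i : ax_free b (a i).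
  by move=> n n0; apply/eqP; apply: contraT => ne; case: hne; exists i, n.
have [N hN] := coef_bounded_seq g.
have [r [hr ex]] := hg (monoS (ax b N.+1)).
have := congr1 (coef (ax b N.+1)) ex.
rewrite -[monoS _]mul1r -(rmorph1 psi) coef_psi_monoS ?axis_ax // eqxx coef_sum.
rewrite big1 => [/eqP|i _]; first by rewrite oner_eq0.
rewrite coef_mul_free; last exact: gen_subring_ax_free ha _ (hr i).
rewrite (hN _ (mem_nth 0 (ltn_ord i)) (ax b N.+1)) ?mulr0 //.
by case: (b) => /=; lia.
Qed.

Lemma monoS_t1 n : monoS (ax true n) = pi t1 ^+ n.
Proof. by rewrite /monoS /skew_mono /= expr0 mulr1 rmorphXn. Qed.

Lemma monoS_t2 n : monoS (ax false n) = pi t2 ^+ n.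
Proof. by rewrite /monoS /skew_mono /= expr0 mul1r rmorphXn. Qed.

Lemma mono_aut_t1 k d : mono_aut (ax true k) d = iter k s1 d.
Proof. by rewrite mono_autE. Qed.

Lemma mono_aut_t2 j d : mono_aut (ax false j) d = iter j s2 d.
Proof. by rewrite mono_autE. Qed.

Lemma automorphic_coef tau x p d :
  automorphic psi tau x -> coef p x * mono_aut p d = tau d * coef p x.
Proof. by move=> hx; rewrite -coef_mulpsi hx coef_psiM. Qed.

Lemma automorphic_coef0 tau x :
  automorphic psi tau x -> forall d, coef (0%N, 0%N) x * d = tau d * coef (0%N, 0%N) x.
Proof. by move=> hx d; rewrite -(automorphic_coef (0%N, 0%N) d hx) mono_aut0. Qed.

Section Forward.
Variables (s2inv : D -> D).
Hypotheses (hD : is_division_ring D) (hs2' : cancel s2inv s2).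

Lemma automorphic_inner tau x k j : automorphic psi tau x ->
  coef (ax true k) x != 0 -> coef (ax false j) x != 0 ->
  is_inner (fun r => iter k s1 (iter j s2inv r)).
Proof.
move=> hx ha hb; apply: (is_inner_comp_twist (hD ha) (hD hb) (iter_can j hs2')) => d.
  by rewrite -mono_aut_t1 (automorphic_coef _ _ hx).
by rewrite -mono_aut_t2 (automorphic_coef _ _ hx).
Qed.

Lemma automorphic_pair_inner tau tau' x y k j :
  automorphic psi tau x -> automorphic psi tau' y ->
  coef (0%N, 0%N) x != 0 -> coef (ax false j) x != 0 ->
  coef (0%N, 0%N) y != 0 -> coef (ax true k) y != 0 ->
  is_inner (fun r => iter k s1 (iter j s2inv r)).
Proof.
move=> hx hy x0 hb y0 ha.
set alpha := (coef (0%N, 0%N) y)^-1 * coef (ax true k) y.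
set beta := (coef (0%N, 0%N) x)^-1 * coef (ax false j) x.
apply: (@is_inner_comp_twist _ _ _ _ id alpha beta _ _ (iter_can j hs2')) => [|||].
- by rewrite unitrMl ?unitrV ?hD.
- by rewrite unitrMl ?unitrV ?hD.
- apply: (twist_untwist (hD y0) (automorphic_coef0 hy)) => d.
  by rewrite -mono_aut_t1 (automorphic_coef _ _ hy).
- apply: (twist_untwist (hD x0) (automorphic_coef0 hx)) => d.
  by rewrite -mono_aut_t2 (automorphic_coef _ _ hx).
Qed.

Lemma aut_normalizable_inner : aut_normalizable psi ->
  exists k1 k2 : nat, (0 < k1)%N /\ (0 < k2)%N /\
    is_inner (fun r : D => iter k1 s1 (iter k2 s2inv r)).
Proof.
case=> m [a [tau [hcomm [_ [_ [haut [hind hfg]]]]]]].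
have free_or_coef b x : ax_free b x \/ exists n, (0 < n)%N /\ coef (ax b n) x != 0.
  case: (classic (exists n, (0 < n)%N /\ coef (ax b n) x != 0)) => [|hn]; first by right.
  by left => n n0; apply/eqP; apply: contraT => ne; case: hn; exists n.
have [i [j [j0 bne]]] := fin_gen_ax_coef false hfg.
have [l [k [k0 ane]]] := fin_gen_ax_coef true hfg.
case: (free_or_coef true (a i)) => [ui | [k' [k'0 ne]]]; last first.
  by exists k', j; do 2 split => //; apply: automorphic_inner (haut i) ne bne.
case: (free_or_coef false (a l)) => [vl | [j' [j'0 ne]]]; last first.
  by exists k, j'; do 2 split => //; apply: automorphic_inner (haut l) ane ne.
have il : i != l by apply: contraTneq ane => <-; rewrite (ui _ k0) eqxx.
have li : l != i by rewrite eq_sym.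
have l0 : coef (0%N, 0%N) (a l) != 0.
  move: (alg_indep_mul_neq (coef (0%N, 0%N) (a i)) hind il (hcomm i l)).
  by apply: contra_neq => l0; apply: mul_ax_free true _ _ ui vl l0.
have i0 : coef (0%N, 0%N) (a i) != 0.
  move: (alg_indep_mul_neq (coef (0%N, 0%N) (a l)) hind li (hcomm l i)).
  by apply: contra_neq => i0; apply: mul_ax_free false _ _ vl ui i0.
exists k, j; do 2 split => //.
exact: automorphic_pair_inner (haut i) (haut l) i0 bne l0 ane.
Qed.

End Forward.

Section Backward.
Variables (k1 k2 : nat) (c : D).
Hypotheses (k1_gt0 : (0 < k1)%N) (k2_gt0 : (0 < k2)%N) (c_unit : c \is a GRing.unit).
Hypothesis c_twist : forall d, c * iter k2 s2 d = iter k1 s1 d * c.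

Local Notation u := (pi t1).
Local Notation v := (pi t2).

Lemma uX_psi n d : u ^+ n * psi d = psi (iter n s1 d) * u ^+ n.
Proof. by rewrite !psiE -rmorphXn -!rmorphM t1X_phi. Qed.

Lemma vX_psi n d : v ^+ n * psi d = psi (iter n s2 d) * v ^+ n.
Proof. by rewrite !psiE -rmorphXn -!rmorphM t2X_phi. Qed.

Lemma uX_vX i j : (0 < i)%N -> (0 < j)%N -> u ^+ i * v ^+ j = 0.
Proof.
by move=> i0 j0; rewrite -(monoS_interior (q := (i, j))) // /monoS rmorphM !rmorphXn.
Qed.

Lemma vX_uX i j : (0 < i)%N -> (0 < j)%N -> v ^+ j * u ^+ i = 0.
Proof. by move=> i0 j0; rewrite -!rmorphXn -rmorphM t2X_t1X rmorphM !rmorphXn uX_vX. Qed.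

Definition aut_gen := u ^+ k1 + psi c * v ^+ k2.

Lemma aut_gen_automorphic : automorphic psi (iter_rmorphism s1 k1) aut_gen.
Proof.
move=> d; rewrite iter_rmorphismE /aut_gen mulrDl mulrDr uX_psi -mulrA vX_psi.
by rewrite mulrA -rmorphM c_twist rmorphM -mulrA.
Qed.

Lemma aut_genX_psi q d :
  aut_gen ^+ q * psi d = psi (iter q (iter_rmorphism s1 k1) d) * aut_gen ^+ q.
Proof. exact: commrX_twist aut_gen_automorphic q d. Qed.

Lemma aut_genX_u q r : (0 < r)%N -> aut_gen ^+ q * u ^+ r = u ^+ (k1 * q + r).
Proof.
elim: q r => [|q IH] r r0; first by rewrite expr0 mul1r muln0.
rewrite exprSr -mulrA {2}/aut_gen mulrDl -exprD -mulrA vX_uX // mulr0 addr0 IH.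
  by rewrite mulnS addnA (addnC k1) -addnA.
by rewrite addn_gt0 k1_gt0.
Qed.

Lemma aut_genX_v q r : (0 < r)%N -> exists2 C, C \is a GRing.unit &
  aut_gen ^+ q * v ^+ r = psi C * v ^+ (k2 * q + r).
Proof.
elim: q r => [|q IH] r r0.
  by exists 1; rewrite ?unitr1 // expr0 mul1r muln0 rmorph1 mul1r.
have [C uC eC] := IH (k2 + r)%N (ltn_addl _ r0).
exists (iter q (iter_rmorphism s1 k1) c * C).
  by rewrite unitrMl // -iter_rmorphismE rmorph_unit.
rewrite exprSr -mulrA /aut_gen mulrDl uX_vX // add0r -mulrA -exprD.
rewrite mulrA aut_genX_psi -mulrA eC mulrA -rmorphM.
by rewrite mulnS addnA (addnC k2).
Qed.

Lemma aut_genXS q : exists C, aut_gen ^+ q.+1 = u ^+ (k1 * q.+1) + psi C * v ^+ (k2 * q.+1).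
Proof.
have [C _ eC] := aut_genX_v q k2_gt0.
exists (iter q (iter_rmorphism s1 k1) c * C).
rewrite exprSr {2}/aut_gen mulrDr aut_genX_u // mulrA aut_genX_psi -mulrA eC mulrA -rmorphM.
by rewrite !mulnS (addnC k1) (addnC k2).
Qed.

Lemma coef_aut_genX n q : coef (ax true (k1 * n)) (aut_gen ^+ q) = (q == n)%:R.
Proof.
have k1n_eq0 : (k1 * n == 0)%N = (n == 0)%N by rewrite muln_eq0 (gtn_eqF k1_gt0).
case: q => [|q].
  rewrite expr0 -(rmorph1 psi) coef_psi ?axis_ax //= xpair_eqE k1n_eq0 eqxx andbT.
  by rewrite [in RHS]eq_sym; case: (n == 0)%N.
have [C ->] := aut_genXS q.
rewrite coefD -[u ^+ _]mul1r -(rmorph1 psi) -monoS_t1 -monoS_t2.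
rewrite !coef_psi_monoS ?axis_ax // /= !xpair_eqE eqxx eqn_pmul2l // andbT.
by rewrite muln_eq0 (gtn_eqF k2_gt0) andbF addr0; case: (_ == _).
Qed.

Definition aut_gens : 'I_1 -> S := fun _ => aut_gen.

Lemma aut_gen_indep : left_alg_indep psi aut_gens.
Proof.
move=> s cc us hs e0 he0; have := congr1 (coef (ax true (k1 * e0 ord0))) hs.
rewrite coef_sum raddf0.
under eq_bigr => e _ do rewrite big_ord1 coef_psiM coef_aut_genX.
have -> : \sum_(e <- s) cc e * (e ord0 == e0 ord0)%:R =
          \sum_(e <- s) (if e0 == e then cc e0 else 0).
  apply: eq_bigr => e _; have -> : (e ord0 == e0 ord0) = (e0 == e).
    by apply/eqP/eqP => [h | -> //]; apply/ffunP => i; rewrite (ord1 i) h.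
  by case: (eqVneq e0 e) => [-> | _]; rewrite ?mulr1 ?mulr0.
by rewrite sum_if_eq_uniq // he0.
Qed.

Definition module_gens : seq S :=
  [seq u ^+ r.+1 | r <- iota 0 k1] ++ [seq v ^+ r.+1 | r <- iota 0 k2] ++ [:: 1].

Definition spanned x := exists r : 'I_(size module_gens) -> S,
  (forall i, gen_subring psi aut_gens (r i)) /\ x = \sum_i r i * module_gens`_i.

Lemma gen_subring_psi_aut_genX d q : gen_subring psi aut_gens (psi d * aut_gen ^+ q).
Proof.
apply: gsMul; first exact: gsD.
elim: q => [|q IH]; first exact: gs1.
by rewrite exprS; apply: gsMul => //; apply: (gsA psi aut_gens ord0).
Qed.

Lemma gen_subring0 : gen_subring psi aut_gens 0.
Proof. by rewrite -(rmorph0 psi); apply: gsD. Qed.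

Lemma spanned0 : spanned 0.
Proof.
exists (fun _ => 0); split => [i|]; first exact: gen_subring0.
by rewrite big1 // => i _; rewrite mul0r.
Qed.

Lemma spannedD x y : spanned x -> spanned y -> spanned (x + y).
Proof.
move=> [r [hr ->]] [r' [hr' ->]]; exists (fun i => r i + r' i); split.
  by move=> i; apply: gsAdd.
by rewrite -big_split; apply: eq_bigr => i _; rewrite mulrDl.
Qed.

Lemma spanned_mul_gen d q y : y \in module_gens -> spanned (psi d * aut_gen ^+ q * y).
Proof.
move=> yg; have hi : (index y module_gens < size module_gens)%N by rewrite index_mem.
exists (fun i => if i == Ordinal hi then psi d * aut_gen ^+ q else 0); split.
  by move=> i; case: ifP => _; [apply: gen_subring_psi_aut_genX | apply: gen_subring0].
rewrite (bigD1 (Ordinal hi)) //= eqxx nth_index // big1 ?addr0 // => i /negbTE ->.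
by rewrite mul0r.
Qed.

Lemma spanned_psi_monoS d p : spanned (psi d * monoS p).
Proof.
case: p => [[|i] [|j]].
- have -> : psi d * monoS (0, 0)%N = psi d * aut_gen ^+ 0 * 1.
    by rewrite monoS0 expr0 !mulr1.
  by apply: spanned_mul_gen; rewrite !mem_cat mem_head !orbT.
- have [C uC eC] := aut_genX_v (j %/ k2) (ltn0Sn (j %% k2)).
  rewrite -[(0, j.+1)%N]/(ax false j.+1) monoS_t2 -[d](divrK uC) rmorphM -mulrA.
  rewrite (divn_eq j k2) -addnS mulnC -eC mulrA; apply: spanned_mul_gen.
  by rewrite !mem_cat (map_f (fun r => v ^+ r.+1)) ?orbT // mem_iota ltn_pmod.
- rewrite -[(i.+1, 0)%N]/(ax true i.+1) monoS_t1.
  rewrite (divn_eq i k1) -addnS mulnC -aut_genX_u // mulrA; apply: spanned_mul_gen.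
  by rewrite !mem_cat (map_f (fun r => u ^+ r.+1)) // mem_iota ltn_pmod.
- by rewrite monoS_interior // mulr0; apply: spanned0.
Qed.

Lemma aut_gen_fin_gen : left_fin_gen_over psi aut_gens.
Proof.
exists module_gens => x; have [s ->] := quotient_lift x; rewrite pi_tsum.
apply: (big_ind spanned); [exact: spanned0 | exact: spannedD |].
by move=> y _; apply: spanned_psi_monoS.
Qed.

End Backward.

Lemma inner_aut_normalizable (hs1 : bijective s1) (s2inv : D -> D)
    (hs2 : cancel s2 s2inv) :
  (exists k1 k2 : nat, (0 < k1)%N /\ (0 < k2)%N /\
    is_inner (fun r : D => iter k1 s1 (iter k2 s2inv r))) -> aut_normalizable psi.
Proof.
move=> [k1 [k2 [k1_gt0 [k2_gt0 [c [c_unit hc]]]]]].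
have c_twist d : c * iter k2 s2 d = iter k1 s1 d * c.
  by have := hc (iter k2 s2 d); rewrite iter_can // => ->; rewrite divrK.
exists 1%N, (aut_gens k1 k2 c), (fun _ => iter_rmorphism s1 k1); split; first by [].
split.
  by move=> i /=; apply: (eq_bij (iter_bij k1 hs1)) => x; rewrite iter_rmorphismE.
split; first by [].
split; first by move=> i; apply: aut_gen_automorphic.
by split; [apply: aut_gen_indep | apply: aut_gen_fin_gen].
Qed.

End Quotient.
End SkewPolynomial.

Unset Implicit Arguments.
Set Strict Implicit.

Theorem lemma5p10 (D : unitRingType) (hD : is_division_ring D)
    (s1 s2 : {rmorphism D -> D}) (s2inv : D -> D)
    (hs1 : bijective s1) (hs2 : cancel s2 s2inv) (hs2' : cancel s2inv s2)
    (hcomm : forall a : D, s1 (s2 a) = s2 (s1 a))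
    (T : nzRingType) (phi : {rmorphism D -> T}) (t1 t2 : T)
    (hT : is_skew_poly2 s1 s2 phi t1 t2)
    (S : nzRingType) (pi : {rmorphism T -> S})
    (hS : is_quotient_by pi (in_ideal2 (t1 * t2))) :
  aut_normalizable (fun b : D => pi (phi b)) <->
  exists k1 k2 : nat, (0 < k1)%N /\ (0 < k2)%N /\
    is_inner (fun r : D => iter k1 s1 (iter k2 s2inv r)).
Proof.
split.
  exact: (aut_normalizable_inner hT hS hD hs2').
exact: (inner_aut_normalizable hT hS hs1 hs2).
Qed.
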